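(* For every quandle $X$ and every subquandle $M\subseteq X$, the regular closure $c^{reg}_X(M)$ associated with the reflection $\pi_0\dashv U$ coincides with the pullback closure $c_X(M)$.
   Context: A quandle is a set $X$ with two binary operations $\lhd,\lhd^{-1}$ satisfying, for all $x,y,z\in X$: $x\lhd x = x = x\lhd^{-1}x$; $(x\lhd y)\lhd^{-1}y = x = (x\lhd^{-1}y)\lhd y$; $(x\lhd y)\lhd z = (x\lhd z)\lhd(y\lhd z)$ and $(x\lhd^{-1}y)\lhd^{-1}z = (x\lhd^{-1}z)\lhd^{-1}(y\lhd^{-1}z)$. Homomorphisms preserve both operations; $\mathsf{Qnd}$ is the resulting category. A quandle is trivial if $x\lhd y = x = x\lhd^{-1}y$ for all $x,y$; these form the full subcategory $\mathsf{Qnd}^*$, with inclusion $U$. For $x\in X$, the orbit $[x]_X$ is the set of all elements $x\lhd^{\alpha_1}x_1\cdots\lhd^{\alpha_n}x_n$ ($n\ge 0$, $x_i\in X$, $\lhd^{\alpha_i}\in\{\lhd,\lhd^{-1}\}$, bracketed from the left). The functor $\pi_0\colon\mathsf{Qnd}\to\mathsf{Qnd}^*$ sends $X$ to the trivial quandle of its orbits and is left adjoint to $U$, with unit $\eta_X\colon X\to U\pi_0(X)$, $x\mapsto[x]_X$. The pullback closure operator $c$: for a subquandle $M\subseteq X$ with inclusion $m$, $c_X(M)$ is the inverse image under $\eta_X$ of the image of $U\pi_0(m)$. The regular closure $c^{reg}_X(M)$ is the equalizer of $\eta_{X+_MX}\circ i$ and $\eta_{X+_MX}\circ j$, where $i,j\colon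 X\to X+_MX$ is the cokernel pair (pushout of $m$ along itself) of the inclusion $m\colon M\to X$ in $\mathsf{Qnd}$. *)

Set Implicit Arguments.


Record quandle := Quandle {
  qcar :> Type;
  qop : qcar -> qcar -> qcar;
  qinv : qcar -> qcar -> qcar;
  qidem : forall x, qop x x = x;
  qidem_inv : forall x, qinv x x = x;
  qright_inv1 : forall x y, qinv (qop x y) y = x;
  qright_inv2 : forall x y, qop (qinv x y) y = x;
  qdistr : forall x y z, qop (qop x y) z = qop (qop x z) (qop y z);
  qdistr_inv : forall x y z, qinv (qinv x y) z = qinv (qinv x z) (qinv y z)
}.

Record qhom (X Y : quandle) := QHom {
  qfun :> X -> Y;
  qhom_op : forall x y, qfun (qop X x y) = qop Y (qfun x) (qfun y);
  qhom_inv : forall x y, qfun (qinv X x y) = qinv Y (qfun x) (qfun y)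
}.

Definition is_subquandle (X : quandle) (M : X -> Prop) : Prop :=
  (forall x y, M x -> M y -> M (qop X x y)) /\
  (forall x y, M x -> M y -> M (qinv X x y)).

Inductive orbit (X : quandle) (x : X) : X -> Prop :=
| orbit_refl : orbit X x x
| orbit_op : forall y z, orbit X x y -> orbit X x (qop X y z)
| orbit_inv : forall y z, orbit X x y -> orbit X x (qinv X y z).

(** Unit of π0 ⊣ U: x ↦ [x]_X (orbits as subsets of X). *)
Definition eta (X : quandle) (x : X) : X -> Prop := orbit X x.

(** A morphism out of the subquandle M is determined by its
    values on elements of M, so  f ∘ m = g ∘ m  reads  forall a, M a -> f a = g a. *)
Definition is_cokernel_pair (X : quandle) (M : X -> Prop) (P : quandle)
  (i j : qhom X P) : Prop :=
  (forall a, M a -> i a = j a) /\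
  (forall (Q : quandle) (f g : qhom X Q),
      (forall a, M a -> f a = g a) ->
      exists h : qhom P Q,
        (forall x, h (i x) = f x) /\ (forall x, h (j x) = g x) /\
        (forall h' : qhom P Q,
            (forall x, h' (i x) = f x) -> (forall x, h' (j x) = g x) ->
            forall p, h' p = h p)).

(** Pullback closure: c_X(M) = η_X^{-1}( image of U π0(m) ) = {x | [x]_X = [a]_X for some a ∈ M}. *)
Definition pullback_closure (X : quandle) (M : X -> Prop) : X -> Prop :=
  fun x => exists a, M a /\ eta X x = eta X a.

(** Regular closure w.r.t. a cokernel pair (P,i,j): equalizer of η_P∘i and η_P∘j. *)
Definition regular_closure (X : quandle) (P : quandle) (i j : qhom X P) : X -> Prop :=
  fun x => eta P (i x) = eta P (j x).

Arguments is_subquandle : clear implicits.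
Arguments is_cokernel_pair : clear implicits.
Arguments pullback_closure : clear implicits.
Arguments regular_closure : clear implicits.
Arguments eta : clear implicits.

(* Both closures contain M and are unions of orbits.  If x is in the regular
   closure, the orbit-invariant indicator of the pullback closure and the
   constant map to True are two morphisms to the trivial quandle on Prop that
   agree on M; they factor through the cokernel pair, and since morphisms
   preserve orbits while orbits in a trivial quandle are singletons, they
   agree at x.  Conversely, if [x] = [a] with a in M, then i x and j x lie in
   the orbits of i a = j a. *)

From Stdlib Require Import FunctionalExtensionality PropExtensionality.

Set Implicit Arguments.

Lemma orbit_trans (X : quandle) (a b c : X) :
  orbit X a b -> orbit X b c -> orbit X a c.
Proof.
  intros Hab Hbc; induction Hbc.
  - exact Hab.
  - apply orbit_op; auto.
  - apply orbit_inv; auto.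
Qed.

Lemma orbit_sym (X : quandle) (a b : X) : orbit X a b -> orbit X b a.
Proof.
  intros Hab; induction Hab as [| y z _ IH | y z _ IH].
  - apply orbit_refl.
  - apply orbit_trans with y; [| exact IH].
    rewrite <- (qright_inv1 X y z) at 2; apply orbit_inv, orbit_refl.
  - apply orbit_trans with y; [| exact IH].
    rewrite <- (qright_inv2 X y z) at 2; apply orbit_op, orbit_refl.
Qed.

Lemma eta_eq_orbit (X : quandle) (a b : X) :
  eta X a = eta X b <-> orbit X a b.
Proof.
  split; intros H.
  - apply orbit_sym; change (eta X b a); rewrite <- H; apply orbit_refl.
  - unfold eta; apply functional_extensionality; intros c.
    apply propositional_extensionality; split; intros Hc.
    + exact (orbit_trans (orbit_sym H) Hc).
    + exact (orbit_trans H Hc).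
Qed.

Lemma qhom_orbit (X Y : quandle) (h : qhom X Y) (a b : X) :
  orbit X a b -> orbit Y (h a) (h b).
Proof.
  intros Hab; induction Hab.
  - apply orbit_refl.
  - rewrite qhom_op; apply orbit_op; assumption.
  - rewrite qhom_inv; apply orbit_inv; assumption.
Qed.

Definition trivial_quandle (T : Type) : quandle.
Proof.
  refine (@Quandle T (fun x _ => x) (fun x _ => x) _ _ _ _ _ _);
    reflexivity.
Defined.

Lemma trivial_quandle_orbit (T : Type) (p q : trivial_quandle T) :
  orbit (trivial_quandle T) p q -> p = q.
Proof. intros Hpq; induction Hpq; [reflexivity | assumption | assumption]. Qed.

Definition orbit_invariant_qhom (X : quandle) (T : Type) (f : X -> T)
  (f_op : forall x y, f (qop X x y) = f x)
  (f_inv : forall x y, f (qinv X x y) = f x) : qhom X (trivial_quandle T) :=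
  @QHom X (trivial_quandle T) f f_op f_inv.

Lemma pullback_closure_op (X : quandle) (M : X -> Prop) (x y : X) :
  pullback_closure X M (qop X x y) = pullback_closure X M x.
Proof.
  unfold pullback_closure.
  rewrite (proj2 (eta_eq_orbit X x (qop X x y))); [reflexivity |].
  apply orbit_op, orbit_refl.
Qed.

Lemma pullback_closure_inv (X : quandle) (M : X -> Prop) (x y : X) :
  pullback_closure X M (qinv X x y) = pullback_closure X M x.
Proof.
  unfold pullback_closure.
  rewrite (proj2 (eta_eq_orbit X x (qinv X x y))); [reflexivity |].
  apply orbit_inv, orbit_refl.
Qed.

Lemma pullback_closure_of_mem (X : quandle) (M : X -> Prop) (a : X) :
  M a -> pullback_closure X M a.
Proof. intros Ha; exists a; split; [exact Ha | reflexivity]. Qed.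

Lemma regular_closure_trivial_equalizer (X : quandle) (M : X -> Prop)
  (P : quandle) (i j : qhom X P) (T : Type)
  (f g : qhom X (trivial_quandle T)) (x : X) :
  is_cokernel_pair X M P i j -> (forall a, M a -> f a = g a) ->
  regular_closure X P i j x -> f x = g x.
Proof.
  intros [_ Huniv] Hfg Hx.
  destruct (Huniv _ f g Hfg) as [h [Hhi [Hhj _]]].
  rewrite <- Hhi, <- Hhj.
  apply trivial_quandle_orbit, qhom_orbit, eta_eq_orbit, Hx.
Qed.

Lemma pullback_closure_sub_regular_closure (X : quandle) (M : X -> Prop)
  (P : quandle) (i j : qhom X P) (x : X) :
  (forall a, M a -> i a = j a) ->
  pullback_closure X M x -> regular_closure X P i j x.
Proof.
  intros Hij [a [Ha Hxa]]; apply eta_eq_orbit in Hxa.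
  unfold regular_closure.
  rewrite (proj2 (eta_eq_orbit P _ _) (qhom_orbit i Hxa)),
    (proj2 (eta_eq_orbit P _ _) (qhom_orbit j Hxa)), Hij by exact Ha.
  reflexivity.
Qed.

Theorem mainTheorem5 (X : quandle) (M : X -> Prop) (HM : is_subquandle X M)
  (P : quandle) (i j : qhom X P) (Hcp : is_cokernel_pair X M P i j) :
  forall x : X, regular_closure X P i j x <-> pullback_closure X M x.
Proof.
  intros x; split.
  - intros Hx.
    pose (top := orbit_invariant_qhom X (T := Prop) (fun _ => True)
                   (fun _ _ => eq_refl) (fun _ _ => eq_refl)).
    pose (pc := orbit_invariant_qhom X (pullback_closure X M)
                  (pullback_closure_op X M) (pullback_closure_inv X M)).
    assert (Htop_pc : top x = pc x).
    { apply (regular_closure_trivial_equalizer top pc Hcp); [| exact Hx].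
      intros a Ha; apply propositional_extensionality.
      split; intros _; [exact (pullback_closure_of_mem X M a Ha) | exact I]. }
    simpl in Htop_pc; rewrite <- Htop_pc; exact I.
  - apply pullback_closure_sub_regular_closure, (proj1 Hcp).
Qed.
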